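(* Let $n \ge 1$ and $0 \le k < n$. There exists a comparison tournament $G$ on $n$ elements $x_1,\dots,x_n$ with the following property: for every set $S \subseteq \{x_1,\dots,x_n\}$ with $|S| < \min\{n, 2k+1\}$, there exists a choice of exactly $k$ corrupted elements that is valid for $G$ (i.e. $G$ restricted to the remaining $n-k$ uncorrupted elements is acyclic) and whose uncorrupted maximum does not lie in $S$. Consequently, any algorithm that always outputs a set containing the uncorrupted maximum must, on this instance, output a set of size at least $\min\{n, 2k+1\}$.
   Context: Model: there are $n$ elements $x_1,\dots,x_n$, exactly $k$ of which are corrupted (the algorithm does not know which). For every pair of distinct elements $x_u, x_v$ the comparison graph (a tournament) specifies that either $x_u$ is larger than $x_v$ or $x_v$ is larger than $x_u$. The comparison graph restricted to the $n-k$ uncorrupted elements is acyclic (a transitive tournament); comparisons involving corrupted elements may be oriented arbitrarily (possibly creating directed cycles). The uncorrupted maximum is the unique uncorrupted element larger than every other uncorrupted element. An algorithm knows $n$ and $k$, may query the orientation of any pair (a comparison query; answers are determined by the fixed comparison graph), and outputs a set of elements. *)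

From mathcomp Require Import all_boot.
Set Implicit Arguments. Unset Strict Implicit. Unset Printing Implicit Defensive.

(* Elements x_1..x_n are indexed by 'I_n.  G u v  means "x_u is larger than x_v". *)

Definition tournament (n : nat) (G : rel 'I_n) : Prop :=
  (forall u, ~~ G u u) /\
  (forall u v, u != v -> G u v (+) G v u).

Definition acyclic_on (n : nat) (G : rel 'I_n) (U : {set 'I_n}) : Prop :=
  forall s : seq 'I_n, s != [::] -> all (fun x => x \in U) s -> ~~ cycle G s.

Definition valid_corruption (n k : nat) (G : rel 'I_n) (C : {set 'I_n}) : Prop :=
  #|C| = k /\ acyclic_on G (~: C).

Definition uncorrupted_max (n : nat) (G : rel 'I_n) (C : {set 'I_n}) (m : 'I_n) : Prop :=
  m \in ~: C /\ (forall y, y \in ~: C -> y != m -> G m y).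

From mathcomp Require Import all_boot zify.

Set Implicit Arguments. Unset Strict Implicit. Unset Printing Implicit Defensive.

(* Put T := min(n, 2k+1). The first T elements form the rotational tournament
   on Z/T, in which each element beats the next half of the cycle; they beat
   all other elements, which are ordered by index. Given any element m of the
   rotation, corrupt the elements lying more than half a turn after m: there
   are at most k of them, and among the others m beats everything and the
   clockwise distance from m is a ranking, so the uncorrupted elements form a
   transitive tournament with maximum m. Since |S| < T, some such m avoids S. *)

Lemma acyclic_on_rank n (G : rel 'I_n) (U : {set 'I_n}) (r : 'I_n -> nat) :
  {in U &, forall u v, G u v -> r v < r u} -> acyclic_on G U.
Proof.
move=> r_decr s s_nil /allP sU.
have path_decr y p : y \in U -> all [in U] p -> path G y p ->
    r (last y p) + (0 < size p) <= r y.
  elim: p y => [|z p IHp] y /= yU; first by rewrite addn0.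
  case/andP=> zU pU /andP[Gyz Pz].
  have := IHp z zU pU Pz; have := r_decr _ _ yU zU Gyz.
  by case: p {IHp pU Pz} => [|w p] /=; lia.
case: s s_nil sU => [//|x s] _ sU; apply/negP => cyc.
have xU : x \in U by apply: sU; rewrite inE eqxx.
have rsU : all [in U] (rcons s x).
  by apply/allP => y; rewrite mem_rcons => /sU.
have := path_decr x (rcons s x) xU rsU cyc.
by rewrite last_rcons size_rcons /=; lia.
Qed.

Lemma exists_card_between (T : finType) (A B : {set T}) k :
  A \subset B -> #|A| <= k <= #|B| ->
  exists C : {set T}, [/\ A \subset C, C \subset B & #|C| = k].
Proof.
move=> sAB; elim: k => [|k IHk] /andP[leAk lekB].
  by exists A; split => //; lia.
have [<-|neAk] := eqVneq #|A| k.+1; first by exists A.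
have [C [sAC sCB cardC]] : exists C : {set T}, [/\ A \subset C, C \subset B & #|C| = k].
  by apply: IHk; lia.
have /subsetPn[x xB xC] : ~~ (B \subset C).
  by apply/negP => /subset_leq_card; lia.
exists (x |: C); split.
- exact: subset_trans sAC (subsetUr _ _).
- by rewrite subUset sub1set xB.
- by rewrite cardsU1 xC cardC.
Qed.

Lemma exists_small_notin n T (S : {set 'I_n}) :
  T <= n -> #|S| < T -> exists m : 'I_n, m < T /\ m \notin S.
Proof.
move=> leTn ltST; pose w (j : 'I_T) := widen_ord leTn j.
have w_inj : injective w by move=> i j /(congr1 val) /= /val_inj.
have /subsetPn[_ /imsetP[j _ ->] wjS] : ~~ ([set w j | j in 'I_T] \subset S).
  by apply/negP => /subset_leq_card; rewrite card_imset // card_ord leqNgt ltST.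
by exists (w j); split => //=.
Qed.

Definition cdist (T u v : nat) := if u <= v then v - u else v + T - u.

Definition rot_beats (T u v : nat) :=
  (0 < cdist T u v) && ((2 * cdist T u v < T) || ((2 * cdist T u v == T) && (u < v))).

Definition block_rel n T : rel 'I_n := fun u v =>
  if u < T then (v < T) ==> rot_beats T u v else (T <= v) && (v < u).

Lemma block_rel_tournament n T : tournament (@block_rel n T).
Proof.
split=> [u|u v /eqP neuv].
  rewrite /block_rel /rot_beats /cdist leqnn subnn.
  by case: ifP => [-> | _]; rewrite ?ltnn ?andbF.
have {}neuv : (u : nat) <> v by move=> /val_inj.
rewrite /block_rel /rot_beats /cdist.
by case: (ltnP u T) => /=; case: (ltnP v T) => /=; repeat case: ifP => /=; lia.
Qed.

Lemma cdist_lt T u v : u < T -> v < T -> cdist T u v < T.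
Proof. by rewrite /cdist; case: ifP; lia. Qed.

Lemma cdist_inj T m u v :
  m < T -> u < T -> v < T -> cdist T m u = cdist T m v -> u = v.
Proof. by rewrite /cdist; case: ifP; case: ifP; lia. Qed.

Lemma rot_beats_cdist T h m u v :
  2 * h < T -> u < T -> v < T -> m < T ->
  cdist T m u <= h -> cdist T m v <= h -> rot_beats T u v ->
  cdist T m u < cdist T m v.
Proof.
rewrite /rot_beats /cdist => lthT ltuT ltvT ltmT.
by case: (leqP m u); case: (leqP m v); case: (leqP u v) => /=; lia.
Qed.

Section NearSet.

Variables (n T h : nat) (m : 'I_n) (U : {set 'I_n}).
Hypotheses (lthT : 2 * h < T) (ltmT : m < T)
  (U_near : {in U, forall x : 'I_n, x < T -> cdist T m x <= h}).

Lemma block_rel_acyclic_near : acyclic_on (@block_rel n T) U.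
Proof.
(* The block ranks above every index below n, closer to m meaning higher. *)
pose r (x : 'I_n) := if x < T then n + h - cdist T m x else val x.
apply: (@acyclic_on_rank _ _ _ r) => u v uU vU; rewrite /r /block_rel.
have := ltn_ord u; have := ltn_ord v.
have := U_near uU; have := U_near vU.
case: (ltnP u T) => ltuT; case: (ltnP v T) => ltvT //=; try lia.
move=> /(_ isT) near_v /(_ isT) near_u _ _ beats.
by have := rot_beats_cdist lthT ltuT ltvT ltmT near_u near_v beats; lia.
Qed.

Lemma block_rel_max_near y : y \in U -> y != m -> block_rel T m y.
Proof.
move=> yU /eqP neym; have {}neym : (y : nat) <> m by move=> /val_inj.
rewrite /block_rel ltmT; case: (ltnP y T) => //= ltyT.
by have := U_near yU ltyT; rewrite /rot_beats /cdist; case: ifP; lia.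
Qed.

End NearSet.

Definition far_set n T h (m : 'I_n) : {set 'I_n} :=
  [set x : 'I_n | (x < T) && (h < cdist T m x)].

Lemma card_far_set n T h (m : 'I_n) : m < T -> #|far_set T h m| <= T - h.+1.
Proof.
move=> ltmT; rewrite cardE -(size_map (fun x : 'I_n => cdist T m x)).
rewrite -(size_iota h.+1 (T - h.+1)); apply: uniq_leq_size.
  rewrite map_inj_in_uniq ?enum_uniq // => x y.
  rewrite !mem_enum !inE => /andP[ltxT _] /andP[ltyT _] /(cdist_inj ltmT ltxT ltyT).
  exact: val_inj.
move=> d /mapP[x]; rewrite mem_enum inE => /andP[ltxT lthx] ->.
by rewrite mem_iota; have := cdist_lt ltmT ltxT; lia.
Qed.

Lemma block_rel_corruption n k (m : 'I_n) :
  k < n -> m < minn n (2 * k + 1) ->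
  exists C : {set 'I_n},
    valid_corruption k (block_rel (minn n (2 * k + 1))) C /\
    uncorrupted_max (block_rel (minn n (2 * k + 1))) C m.
Proof.
set T := minn n (2 * k + 1) => ltkn ltmT.
have leT2k : T <= 2 * k + 1 by rewrite geq_minr.
pose h := (T - 1) %/ 2.
have lthT : 2 * h < T by rewrite /h; lia.
have far_m : m \notin far_set T h m by rewrite inE /cdist leqnn subnn; lia.
have [C [sFC sCm cardC]] : exists C : {set 'I_n},
    [/\ far_set T h m \subset C, C \subset [set~ m] & #|C| = k].
  apply: exists_card_between.
  - by apply/subsetP => x xF; rewrite !inE; apply: contraTneq xF => ->.
  - by rewrite cardsC1 card_ord; have := card_far_set h ltmT; rewrite /h; lia.
have near : {in ~: C, forall x : 'I_n, x < T -> cdist T m x <= h}.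
  move=> x; rewrite inE => xC ltxT; rewrite leqNgt; apply: contra xC => farx.
  by apply: (subsetP sFC); rewrite inE ltxT farx.
exists C; split; first by split; last exact: block_rel_acyclic_near lthT ltmT near.
split; last exact: block_rel_max_near lthT ltmT near.
by rewrite inE; apply/negP => /(subsetP sCm); rewrite !inE eqxx.
Qed.

Theorem mainTheorem1 (n k : nat) (hn : 1 <= n) (hk : k < n) :
  exists G : rel 'I_n,
    tournament G /\
    forall S : {set 'I_n}, #|S| < minn n (2 * k + 1) ->
      exists C : {set 'I_n},
        valid_corruption k G C /\
        exists m : 'I_n, uncorrupted_max G C m /\ m \notin S.
Proof.
exists (block_rel (minn n (2 * k + 1))); split; first exact: block_rel_tournament.
move=> S ltST.
have [m [ltmT mS]] := exists_small_notin (geq_minl n (2 * k + 1)) ltST.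
have [C [validC maxC]] := block_rel_corruption hk ltmT.
by exists C; split; last by exists m.
Qed.
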